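(* Let $\mathcal G$ be a rooted digraph, $T>0$, $r\in(0,1)^N$, $\xi\in\Xi$, and $\mathcal A:=\mathcal A_s\times\mathbb Z_{\ge0}$. If $\xi$ contains the synchronization string $\zeta$ (with respect to some root $i^*$) infinitely often, then $\mathcal H_\xi$ renders $\mathcal A$ uniformly globally stable (UGS) and globally finite-time attractive (GFTA). If $\xi$ contains $\zeta$ uniformly infinitely often, then $\mathcal H_\xi$ renders $\mathcal A$ UGS and globally fixed-time attractive (GFxTA).
   Context: $\mathcal G=(\mathcal V,\mathcal E)$ is a simple digraph on $\mathcal V=\{1,\dots,N\}$; $(i,j)\in\mathcal E$ means $j$ is an out-neighbor of $i$; $\mathcal E_i^-$ is the set of out-edges of $i$. A path is a sequence of pairwise distinct vertices with consecutive pairs in $\mathcal E$, its length the number of edges. A root is a vertex from which every other vertex is reachable; rooted means a root exists. For a root $i^*$, $\mathcal V_q(i^* )$ is the set of vertices at shortest-path distance $q$ from $i^*$ and $q^*$ the maximal distance. $\underline r=\min_ir_i$, $\ell^*:=N(\lfloor1/\underline r\rfloor+1)$. A subgraph $(\mathcal V,\mathcal E')$, $\mathcal E'\subseteq\mathcal E$, is feasible if for every $i$ either $\mathcal E_i^-\subseteq\mathcal E'$ or $\mathcal E_i^-\cap\mathcal E'=\varnothing$. $\Xi$ is the set of infinite sequences $\xi=\phi_1\phi_2\cdots$ of feasible subgraphs, $\phi_\lambda=(\mathcal V,\mathcal E_\lambda)$. With $\mathcal G_q=(\mathcal V,\bigcup_{i\in\mathcal V_q(i^* )}\mathcal E_i^-)$,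 the synchronization string w.r.t. $i^*$ is $\zeta=\mathcal G_0\cdots\mathcal G_0\cdots\mathcal G_{q^*-1}\cdots\mathcal G_{q^*-1}$, each $\mathcal G_q$ repeated consecutively $\ell^*$ times. $\xi$ contains $\zeta$ infinitely often if it has infinitely many pairwise disjoint blocks of consecutive terms equal to $\zeta$; uniformly infinitely often if there is $n\in\mathbb Z_{>0}$ such that every block of $n$ consecutive terms of $\xi$ contains $\zeta$ as a block. Hybrid system $\mathcal H_\xi$: state $x=(\tau,\lambda)\in\mathbb R^N_{\ge0}\times\mathbb Z_{\ge0}$; flow set $C=[0,1]^N\times\mathbb Z_{\ge0}$ with $\dot\tau=\frac1T\mathbf 1_N$, $\dot\lambda=0$; jump set $D=\{\tau\in[0,1]^N:\max_i\tau_i=1\}\times\mathbb Z_{\ge0}$ with $x^+\in G_{\lambda+1}(\tau)\times\{\lambda+1\}$, where $G_\lambda$ is the outer-semicontinuous hull of $G_\lambda^0(\tau)=\{g:g_i=0,\ g_j\in\mathcal R_{j,\lambda}(\tau)\ \forall j\ne i\}$, $i$ an agent with $\tau_i=1$, and $\mathcal R_{j,\lambda}(\tau)=\{0\}$, $\{0,1\}$, $\{1\}$ if $(i,j)\in\mathcal E_\lambda$ and $\tau_j<r_j$, $=r_j$, $>r_j$ respectively, and $\{\tau_j\}$ if $(i,j)\notin\mathcal E_\lambda$. Solutions are hybrid arcs on hybrid time domains (unions of $[t_k,t_{k+1}]\times\{k\}$) that flow in $C$ according to the flow map and jump from $D$ via the jump map. $\mathcal A_s:=\{\mu\mathbf 1_N:\mu\in[0,1]\}\cup\{0,1\}^N$;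 $|x|_{\mathcal A}$ is the Euclidean distance from $x$ (viewed in $\mathbb R^{N+1}$) to $\mathcal A$. $\mathcal H_\xi$ renders $\mathcal A$: UGS if there is a class-$\mathcal K_\infty$ function $\alpha$ with $|x(t,k)|_{\mathcal A}\le\alpha(|x(0,0)|_{\mathcal A})$ for every solution and all $(t,k)\in\operatorname{dom}x$; GFTA if for each solution $x$ there is $\bar T(x(0,0))>0$ with $|x(t,k)|_{\mathcal A}=0$ for all $(t,k)\in\operatorname{dom}x$ with $t+k\ge\bar T(x(0,0))$; GFxTA if it is GFTA with $\bar T$ a constant independent of $x(0,0)$. *)

From Stdlib Require Import Reals List Lia Lra.
From Coquelicot Require Import Rbar Lub.
Open Scope R_scope.

(** * Digraphs on vertices 0..N-1; an edge relation E : nat -> nat -> Prop,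
    E i j meaning (i,j) is an edge, i.e. j is an out-neighbour of i. *)

Definition simple_digraph (N : nat) (E : nat -> nat -> Prop) : Prop :=
  forall i j, E i j -> (i < N)%nat /\ (j < N)%nat /\ i <> j.

Fixpoint chain (E : nat -> nat -> Prop) (l : list nat) : Prop :=
  match l with
  | a :: ((b :: _) as t) => E a b /\ chain E t
  | _ => True
  end.

Definition is_path (E : nat -> nat -> Prop) (a b : nat) (q : nat) : Prop :=
  exists l : list nat, NoDup l /\ chain E l /\ hd_error l = Some a /\
    last l a = b /\ length l = S q.

Definition is_root (N : nat) (E : nat -> nat -> Prop) (i : nat) : Prop :=
  (i < N)%nat /\ forall j, (j < N)%nat -> exists q, is_path E i j q.

Definition rooted (N : nat) (E : nat -> nat -> Prop) : Prop :=
  exists i, is_root N E i.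

Definition sp_dist (E : nat -> nat -> Prop) (i j q : nat) : Prop :=
  is_path E i j q /\ forall q', is_path E i j q' -> (q <= q')%nat.

Definition in_Vq (N : nat) (E : nat -> nat -> Prop) (istar q j : nat) : Prop :=
  (j < N)%nat /\ sp_dist E istar j q.

Definition is_qstar (N : nat) (E : nat -> nat -> Prop) (istar qs : nat) : Prop :=
  (exists j, in_Vq N E istar qs j) /\
  forall j q, in_Vq N E istar q j -> (q <= qs)%nat.

Definition feasible (E E' : nat -> nat -> Prop) : Prop :=
  (forall a b, E' a b -> E a b) /\
  forall i, (forall j, E i j -> E' i j) \/ (forall j, E i j -> ~ E' i j).

(* xi n is the (n+1)-th term phi_{n+1} of the sequence xi = phi_1 phi_2 ... *)
Definition in_Xi (E : nat -> nat -> Prop) (xi : nat -> nat -> nat -> Prop) : Prop :=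
  forall n, feasible E (xi n).

Fixpoint minR (n : nat) (r : nat -> R) (acc : R) : R :=
  match n with
  | O => acc
  | S m => Rmin (minR m r acc) (r m)
  end.

Definition rmin (N : nat) (r : nat -> R) : R := minR N r (r O).

Definition lstar (N : nat) (r : nat -> R) : nat :=
  (N * (Z.to_nat (Int_part (/ rmin N r)) + 1))%nat.

Definition Gq (N : nat) (E : nat -> nat -> Prop) (istar q : nat) : nat -> nat -> Prop :=
  fun a b => in_Vq N E istar q a /\ E a b.

(* the block of xi starting at position p equals zeta = G_0^{l*} ... G_{q*-1}^{l*} *)
Definition zeta_at (N : nat) (E : nat -> nat -> Prop) (r : nat -> R) (istar qs : nat)
    (xi : nat -> nat -> nat -> Prop) (p : nat) : Prop :=
  forall q m, (q < qs)%nat -> (m < lstar N r)%nat ->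
    forall a b, xi (p + q * lstar N r + m)%nat a b <-> Gq N E istar q a b.

(* xi contains zeta (w.r.t. some root istar) infinitely often:
   infinitely many pairwise disjoint occurrences *)
Definition contains_io (N : nat) (E : nat -> nat -> Prop) (r : nat -> R)
    (xi : nat -> nat -> nat -> Prop) : Prop :=
  exists istar qs, is_root N E istar /\ is_qstar N E istar qs /\
  exists pos : nat -> nat,
    (forall n, (pos n + qs * lstar N r <= pos (S n))%nat) /\
    (forall n, zeta_at N E r istar qs xi (pos n)).

(* uniformly infinitely often: every window of n consecutive terms contains zeta *)
Definition contains_uio (N : nat) (E : nat -> nat -> Prop) (r : nat -> R)
    (xi : nat -> nat -> nat -> Prop) : Prop :=
  exists istar qs, is_root N E istar /\ is_qstar N E istar qs /\
  exists n : nat, (0 < n)%nat /\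
    forall s, exists p, (s <= p)%nat /\ (p + qs * lstar N r <= s + n)%nat /\
      zeta_at N E r istar qs xi p.

(* state x = (tau, lambda); only coordinates 0..N-1 of tau are meaningful *)
Definition State : Type := ((nat -> R) * nat)%type.

Definition inC (N : nat) (x : State) : Prop :=
  forall i, (i < N)%nat -> 0 <= fst x i <= 1.

Definition inD (N : nat) (x : State) : Prop :=
  inC N x /\ exists i, (i < N)%nat /\ fst x i = 1.

(* v in R_{j,lambda}(tau) when agent i fires, El = edge set E_lambda *)
Definition Rset (El : nat -> nat -> Prop) (r : nat -> R) (i : nat) (tau : nat -> R)
    (j : nat) (v : R) : Prop :=
  (El i j -> (tau j < r j /\ v = 0) \/ (tau j = r j /\ (v = 0 \/ v = 1)) \/
             (tau j > r j /\ v = 1)) /\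
  (~ El i j -> v = tau j).

(* graph of G^0_lambda (defined on the tau-projection of D) *)
Definition G0graph (N : nat) (r : nat -> R) (El : nat -> nat -> Prop)
    (tau g : nat -> R) : Prop :=
  (forall i, (i < N)%nat -> 0 <= tau i <= 1) /\
  exists i, (i < N)%nat /\ tau i = 1 /\ g i = 0 /\
    forall j, (j < N)%nat -> j <> i -> Rset El r i tau j (g j).

(* G_lambda: outer-semicontinuous hull (graph = closure of the graph of G^0) *)
Definition Gmap (N : nat) (r : nat -> R) (El : nat -> nat -> Prop)
    (tau g : nat -> R) : Prop :=
  forall eps, 0 < eps -> exists tau' g', G0graph N r El tau' g' /\
    forall j, (j < N)%nat -> Rabs (tau j - tau' j) < eps /\ Rabs (g j - g' j) < eps.

Definition compact_htd (dom : R -> nat -> Prop) : Prop :=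
  exists (J : nat) (tt : nat -> R), tt O = 0 /\
    (forall j, (j <= J)%nat -> tt j <= tt (S j)) /\
    forall t k, dom t k <-> ((k <= J)%nat /\ tt k <= t <= tt (S k)).

Definition htd (dom : R -> nat -> Prop) : Prop :=
  forall T J, dom T J -> compact_htd (fun t k => dom t k /\ t <= T /\ (k <= J)%nat).

Definition interior_pt (dom : R -> nat -> Prop) (t : R) (j : nat) : Prop :=
  exists t1 t2, t1 < t < t2 /\ dom t1 j /\ dom t2 j.

Definition is_solution (N : nat) (T : R) (r : nat -> R) (xi : nat -> nat -> nat -> Prop)
    (x : R -> nat -> State) (dom : R -> nat -> Prop) : Prop :=
  htd dom /\ dom 0 O /\
  (inC N (x 0 O) \/ inD N (x 0 O)) /\
  (forall j s, dom s j -> forall i, (i < N)%nat ->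
     forall eps, 0 < eps -> exists delta, 0 < delta /\
       forall t, dom t j -> Rabs (t - s) < delta ->
         Rabs (fst (x t j) i - fst (x s j) i) < eps) /\
  (forall j t1 t2, dom t1 j -> dom t2 j -> snd (x t1 j) = snd (x t2 j)) /\
  (forall j t, interior_pt dom t j ->
     inC N (x t j) /\
     forall i, (i < N)%nat -> derivable_pt_lim (fun s => fst (x s j) i) t (/ T)) /\
  (* jumps: x^+ in G_{lambda+1}(tau) x {lambda+1}; E_{lambda+1} = xi lambda *)
  (forall t j, dom t j -> dom t (S j) ->
     inD N (x t j) /\
     Gmap N r (xi (snd (x t j))) (fst (x t j)) (fst (x t (S j))) /\
     snd (x t (S j)) = S (snd (x t j))).

Definition in_As (N : nat) (a : nat -> R) : Prop :=
  (exists mu, 0 <= mu <= 1 /\ forall i, (i < N)%nat -> a i = mu) \/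
  (forall i, (i < N)%nat -> a i = 0 \/ a i = 1).

Fixpoint sumN (n : nat) (f : nat -> R) : R :=
  match n with
  | O => 0
  | S m => sumN m f + f m
  end.

Definition distA (N : nat) (x : State) : R :=
  real (Glb_Rbar (fun d => exists (a : nat -> R) (l : nat), in_As N a /\
     d = sqrt (sumN N (fun i => (fst x i - a i) ^ 2) + (INR (snd x) - INR l) ^ 2))).

Definition class_Kinf (alpha : R -> R) : Prop :=
  alpha 0 = 0 /\
  (forall s, 0 <= s -> forall eps, 0 < eps -> exists delta, 0 < delta /\
     forall s', 0 <= s' -> Rabs (s' - s) < delta -> Rabs (alpha s' - alpha s) < eps) /\
  (forall s1 s2, 0 <= s1 -> s1 < s2 -> alpha s1 < alpha s2) /\
  (forall M, exists s, 0 <= s /\ M < alpha s).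

Definition UGS (N : nat) (T : R) (r : nat -> R) (xi : nat -> nat -> nat -> Prop) : Prop :=
  exists alpha, class_Kinf alpha /\
    forall x dom, is_solution N T r xi x dom ->
      forall t k, dom t k -> distA N (x t k) <= alpha (distA N (x 0 O)).

Definition GFTA (N : nat) (T : R) (r : nat -> R) (xi : nat -> nat -> nat -> Prop) : Prop :=
  exists Tbar : State -> R,
    forall x dom, is_solution N T r xi x dom ->
      0 < Tbar (x 0 O) /\
      forall t k, dom t k -> Tbar (x 0 O) <= t + INR k -> distA N (x t k) = 0.

Definition GFxTA (N : nat) (T : R) (r : nat -> R) (xi : nat -> nat -> nat -> Prop) : Prop :=
  exists Tbar : R, 0 < Tbar /\
    forall x dom, is_solution N T r xi x dom ->
      forall t k, dom t k -> Tbar <= t + INR k -> distA N (x t k) = 0.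

(** Between jumps all timers advance at the common rate [1/T], and a jump
    only resets timers to 0 or sets them to 1.  On the circle [R/Z], where 1 is identified
    with 0, neither operation spreads the timers apart, which gives stability with a linear
    gain.

    For attractivity, an occurrence of the synchronization string propagates synchrony
    outward from the root [i*].  While only the agents of [V_q] may fire, during [l*]
    consecutive jumps, every agent of the synchronized ball of radius [q] must fire:
    otherwise its timer is never reset, so these jumps happen within time [T], whereas two
    firings of agent [i] are at least [r_i T] apart and hence each agent fires at most
    [floor(1/r_min) + 1 = l*/N] times in that time, too few for the remaining agents to
    produce [l*] jumps.  When an agent of [V_q] fires, the
    whole ball and the out-neighbours of that agent land in [{0, 1}], so afterwards the
    ball of radius [q + 1] is synchronized.  After [q*] rounds all timers agree modulo 1,
    i.e. the state lies in [A].  As flow intervals last at most [T], the hybrid time by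
    which the string has occurred bounds the time of convergence, uniformly when the
    string occurs uniformly often. *)

From Stdlib Require Import Reals Lra Lia List Wf_nat ZArith Classical IndefiniteDescription.
From Coquelicot Require Import Rbar Lub.
Import ListNotations.
Open Scope R_scope.

(** * Shortest-path balls around the root *)

Definition reach_within (E : nat -> nat -> Prop) (istar q c : nat) : Prop :=
  exists q', (q' <= q)%nat /\ is_path E istar c q'.

Section Paths.
Variable E : nat -> nat -> Prop.

Lemma chain_app_l (l1 l2 : list nat) : chain E (l1 ++ l2) -> chain E l1.
Proof.
  induction l1 as [|a [|b l1] IH]; simpl; auto.
  intros [Hab Hrest]; exact (conj Hab (IH Hrest)).
Qed.

Lemma chain_snoc (l : list nat) (d c : nat) :
  chain E l -> (l <> [] -> E (last l d) c) -> chain E (l ++ [c]).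
Proof.
  induction l as [|a [|b l] IH]; simpl; auto.
  - intros _ Hc; split; auto; apply Hc; discriminate.
  - intros [Hab Hrest] Hc; split; auto.
    apply IH; auto; intros _; apply Hc; discriminate.
Qed.

Lemma chain_snoc_inv (l : list nat) (d c : nat) :
  chain E (l ++ [c]) -> l <> [] -> E (last l d) c.
Proof.
  induction l as [|a [|b l] IH]; simpl; try congruence.
  - tauto.
  - intros [_ Hrest] _; apply IH; auto; discriminate.
Qed.

Lemma is_path_0 (a b : nat) : is_path E a b 0 -> b = a.
Proof.
  intros [[|y [|z l]] [_ [_ [Hhd [Hl Hlen]]]]]; simpl in *; try lia.
  now injection Hhd; intros ->.
Qed.

Lemma is_path_refl (a : nat) : is_path E a a 0.
Proof. exists [a]; repeat split; repeat constructor; auto. Qed.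

Lemma is_path_to_member (a c : nat) (l : list nat) :
  NoDup l -> chain E l -> hd_error l = Some a -> In c l ->
  exists n, (S n <= length l)%nat /\ is_path E a c n.
Proof.
  intros Hnd Hch Hhd Hin.
  destruct (in_split c l Hin) as [l1 [l2 ->]].
  replace (l1 ++ c :: l2) with ((l1 ++ [c]) ++ l2) in Hnd, Hch by now rewrite <- app_assoc.
  exists (length l1); split; [rewrite length_app; simpl; lia|].
  exists (l1 ++ [c]); repeat split.
  - eapply NoDup_app_remove_r; eauto.
  - eapply chain_app_l; eauto.
  - rewrite <- Hhd; destruct l1; reflexivity.
  - apply last_last.
  - rewrite length_app; simpl; lia.
Qed.

Lemma is_path_extend (a p c n : nat) :
  is_path E a p n -> E p c -> exists m, (m <= S n)%nat /\ is_path E a c m.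
Proof.
  intros [l [Hnd [Hch [Hhd [Hl Hlen]]]]] Hpc.
  destruct (classic (In c l)) as [Hin|Hout].
  - destruct (is_path_to_member a c l Hnd Hch Hhd Hin) as [m [Hm Hp]].
    exists m; split; [lia|exact Hp].
  - assert (Hne : l <> []) by (intros ->; discriminate).
    exists (S n); split; [lia|].
    exists (l ++ [c]); repeat split.
    + apply NoDup_app; auto; [repeat constructor; auto|].
      intros y Hy [<-|[]]; contradiction.
    + apply chain_snoc with (d := a); auto; intros _; now rewrite Hl.
    + rewrite <- Hhd; destruct l; [contradiction|reflexivity].
    + apply last_last.
    + rewrite length_app; simpl; lia.
Qed.

Lemma is_path_last_edge (a c n : nat) :
  is_path E a c (S n) -> exists p, is_path E a p n /\ E p c.
Proof.
  intros [l [Hnd [Hch [Hhd [Hl Hlen]]]]].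
  assert (Hne : l <> []) by (intros ->; discriminate).
  destruct (exists_last Hne) as [l' [c' ->]].
  rewrite last_last in Hl; subst c'.
  assert (Hne' : l' <> []) by (intros ->; discriminate).
  exists (last l' a); split; [|eapply chain_snoc_inv; eauto].
  exists l'; repeat split.
  - eapply NoDup_app_remove_r; eauto.
  - eapply chain_app_l; eauto.
  - rewrite <- Hhd; destruct l'; [contradiction|reflexivity].
  - rewrite length_app in Hlen; simpl in Hlen; lia.
Qed.

End Paths.

Section Balls.
Variables (N : nat) (E : nat -> nat -> Prop) (istar : nat).

Lemma reach_within_root (q : nat) : reach_within E istar q istar.
Proof. exists O; split; [lia|apply is_path_refl]. Qed.

Lemma reach_within_0 (c : nat) : reach_within E istar 0 c -> c = istar.
Proof.
  intros [q' [Hq Hp]]; replace q' with O in Hp by lia.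
  eapply is_path_0; eauto.
Qed.

Lemma in_Vq_reach_within (q c : nat) : in_Vq N E istar q c -> reach_within E istar q c.
Proof. intros [_ [Hp _]]; exists q; auto. Qed.

Lemma reach_within_S (q c : nat) :
  simple_digraph N E -> reach_within E istar (S q) c -> ~ reach_within E istar q c ->
  exists p, in_Vq N E istar q p /\ E p c.
Proof.
  intros Hs [q' [Hq' Hpath]] Hfar.
  replace q' with (S q) in Hpath
    by (destruct (Nat.eq_dec q' (S q)); auto; exfalso; apply Hfar; exists q'; split; auto; lia).
  destruct (is_path_last_edge E istar c q Hpath) as [p [Hp Hpc]].
  exists p; split; [|exact Hpc].
  split; [apply (Hs p c Hpc)|split; [exact Hp|]].
  intros q'' Hq''; apply Nat.nlt_ge; intros Hlt; apply Hfar.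
  destruct (is_path_extend E istar p c q'' Hq'' Hpc) as [m [Hm Hmc]].
  exists m; split; [lia|exact Hmc].
Qed.

Lemma reach_within_qstar (qs c : nat) :
  is_root N E istar -> is_qstar N E istar qs -> (c < N)%nat -> reach_within E istar qs c.
Proof.
  intros [_ Hroot] [_ Hmax] Hc.
  destruct (dec_inh_nat_subset_has_unique_least_element (fun q => is_path E istar c q)
              (fun q => classic _) (Hroot c Hc)) as [m [[Hm Hmin] _]].
  exists m; split; [apply (Hmax c m)|]; repeat split; auto.
Qed.

End Balls.

(** * The jump map as a closed relation *)

Definition jump_by (N : nat) (r : nat -> R) (El : nat -> nat -> Prop) (i : nat)
    (b a : nat -> R) : Prop :=
  (i < N)%nat /\ b i = 1 /\ a i = 0 /\
  forall j, (j < N)%nat -> j <> i ->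
    (El i j -> (a j = 0 /\ b j <= r j) \/ (a j = 1 /\ r j <= b j)) /\
    (~ El i j -> a j = b j).

Definition upward_closed (P : R -> Prop) : Prop := forall e e', P e -> e <= e' -> P e'.

Lemma upward_closed_or (P Q : R -> Prop) :
  upward_closed P -> upward_closed Q ->
  (forall eps, 0 < eps -> P eps \/ Q eps) ->
  (forall eps, 0 < eps -> P eps) \/ (forall eps, 0 < eps -> Q eps).
Proof.
  intros HP HQ H.
  destruct (classic (forall eps, 0 < eps -> P eps)) as [|HnP]; [now left|right].
  apply not_all_ex_not in HnP as [e0 He0]; apply imply_to_and in He0 as [He0 HnP0].
  intros eps Heps.
  destruct (H (Rmin eps e0)) as [HPm|HQm]; [now apply Rmin_pos| |].
  - exfalso; apply HnP0, (HP _ _ HPm), Rmin_r.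
  - apply (HQ _ _ HQm), Rmin_l.
Qed.

Lemma upward_closed_exists_lt (n : nat) (P : nat -> R -> Prop) :
  (forall i, upward_closed (P i)) ->
  (forall eps, 0 < eps -> exists i, (i < n)%nat /\ P i eps) ->
  exists i, (i < n)%nat /\ forall eps, 0 < eps -> P i eps.
Proof.
  intros HP; induction n as [|n IH]; intros H.
  - destruct (H 1 Rlt_0_1) as [i [Hi _]]; lia.
  - destruct (upward_closed_or (fun e => exists i, (i < n)%nat /\ P i e) (P n)) as [Hlow|Hn].
    + intros e e' [i [Hi He]] Hle; exists i; split; [exact Hi|exact (HP i e e' He Hle)].
    + apply HP.
    + intros eps Heps; destruct (H eps Heps) as [i [Hi He]].
      destruct (Nat.eq_dec i n) as [->|Hne]; [now right|left; exists i; split; [lia|exact He]].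
    + destruct (IH Hlow) as [i [Hi Hall]]; exists i; split; [lia|exact Hall].
    + exists n; split; [lia|exact Hn].
Qed.

Lemma eq_of_close (a b : R) : (forall eps, 0 < eps -> Rabs (a - b) < eps) -> a = b.
Proof.
  intros H; destruct (Req_dec a b) as [|Hne]; [assumption|exfalso].
  assert (Hpos : 0 < Rabs (a - b)) by (apply Rabs_pos_lt; lra).
  specialize (H _ Hpos); lra.
Qed.

Lemma Rset_closed (El : nat -> nat -> Prop) (r : nat -> R) (i j : nat) (tj v : R) :
  (forall eps, 0 < eps -> exists tau' v',
     Rset El r i tau' j v' /\ Rabs (tj - tau' j) < eps /\ Rabs (v - v') < eps) ->
  (El i j -> (v = 0 /\ tj <= r j) \/ (v = 1 /\ r j <= tj)) /\ (~ El i j -> v = tj).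
Proof.
  intros H; split.
  - intros Hij.
    destruct (upward_closed_or (fun e => Rabs (v - 0) < e /\ tj < r j + e)
                               (fun e => Rabs (v - 1) < e /\ r j - e < tj)) as [H0|H1].
    + intros e e' [h1 h2] h; split; lra.
    + intros e e' [h1 h2] h; split; lra.
    + intros eps Heps; destruct (H eps Heps) as [t' [v' [[Hin _] [Ht Hv]]]].
      apply Rabs_def2 in Ht.
      destruct (Hin Hij) as [[Hlt ->]|[[Heq [-> | ->]]|[Hgt ->]]];
        [left|left|right|right]; split; (assumption || lra).
    + left; split.
      * apply eq_of_close; intros; apply H0; assumption.
      * apply Rle_plus_epsilon; intros; left; apply H0; assumption.
    + right; split.
      * apply eq_of_close; intros; apply H1; assumption.
      * apply Rle_plus_epsilon; intros eps Heps; pose proof (proj2 (H1 eps Heps)); lra.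
  - intros Hn; apply eq_of_close; intros eps Heps.
    destruct (H (eps / 2)) as [t' [v' [[_ Hout] [Ht Hv]]]]; [lra|].
    rewrite (Hout Hn) in Hv.
    apply Rabs_def2 in Ht; apply Rabs_def2 in Hv; apply Rabs_def1; lra.
Qed.

(* Only finitely many agents can fire, so a single agent [i] fires in approximations of
   [(tau, g)] from the graph of [G^0_lambda] that are arbitrarily close; every condition of
   [jump_by] is closed. *)
Lemma Gmap_jump_by (N : nat) (r : nat -> R) (El : nat -> nat -> Prop) (tau g : nat -> R) :
  Gmap N r El tau g -> exists i, jump_by N r El i tau g.
Proof.
  intros HG.
  set (approx := fun i eps => exists tau' g' : nat -> R,
         tau' i = 1 /\ g' i = 0 /\
         (forall j, (j < N)%nat -> j <> i -> Rset El r i tau' j (g' j)) /\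
         forall j, (j < N)%nat -> Rabs (tau j - tau' j) < eps /\ Rabs (g j - g' j) < eps).
  destruct (upward_closed_exists_lt N approx) as [i [Hi Happrox]].
  - intros i e e' [t' [g' [H1 [H2 [H3 H4]]]]] Hle.
    exists t', g'; do 3 (split; [assumption|]).
    intros j Hj; destruct (H4 j Hj); split; lra.
  - intros eps Heps; destruct (HG eps Heps) as [t' [g' [[_ [i [Hi [H1 [H2 H3]]]]] H4]]].
    exists i; split; [exact Hi|]; exists t', g'; auto.
  - exists i; split; [exact Hi|split; [|split]].
    + apply eq_of_close; intros eps Heps.
      destruct (Happrox eps Heps) as [t' [g' [H1 [_ [_ H4]]]]].
      rewrite <- H1; apply H4, Hi.
    + apply eq_of_close; intros eps Heps.
      destruct (Happrox eps Heps) as [t' [g' [_ [H2 [_ H4]]]]].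
      rewrite <- H2; apply H4, Hi.
    + intros j Hj Hji; apply Rset_closed; intros eps Heps.
      destruct (Happrox eps Heps) as [t' [g' [_ [_ [H3 H4]]]]].
      exists t', (g' j); split; [apply H3; assumption|apply H4, Hj].
Qed.

Lemma jump_by_range (N : nat) (r : nat -> R) (El : nat -> nat -> Prop) (i : nat)
    (b a : nat -> R) :
  jump_by N r El i b a -> (forall j, (j < N)%nat -> 0 <= b j <= 1) ->
  forall j, (j < N)%nat -> 0 <= a j <= 1.
Proof.
  intros [Hi [Hb [Ha Hj]]] Hrange j Hjn.
  destruct (Nat.eq_dec j i) as [->|Hne]; [rewrite Ha; lra|].
  destruct (Hj j Hjn Hne) as [Hhit Hmiss]; destruct (classic (El i j)) as [He|He].
  - destruct (Hhit He) as [[-> _]|[-> _]]; lra.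
  - rewrite (Hmiss He); apply Hrange, Hjn.
Qed.

(** * Distance to [A] and clustering on the circle *)

Lemma sumN_nonneg (n : nat) (f : nat -> R) :
  (forall i, (i < n)%nat -> 0 <= f i) -> 0 <= sumN n f.
Proof.
  induction n as [|n IH]; simpl; intros H; [lra|].
  pose proof (H n (Nat.lt_succ_diag_r n)).
  assert (0 <= sumN n f) by (apply IH; intros; apply H; lia); lra.
Qed.

Lemma sumN_term_le (n : nat) (f : nat -> R) (i : nat) :
  (forall j, (j < n)%nat -> 0 <= f j) -> (i < n)%nat -> f i <= sumN n f.
Proof.
  induction n as [|n IH]; simpl; intros H Hi; [lia|].
  pose proof (H n (Nat.lt_succ_diag_r n)).
  destruct (Nat.eq_dec i n) as [->|Hne].
  - assert (0 <= sumN n f) by (apply sumN_nonneg; intros; apply H; lia); lra.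
  - assert (f i <= sumN n f) by (apply IH; [intros; apply H|]; lia); lra.
Qed.

Lemma sumN_le_const (n : nat) (f : nat -> R) (M : R) :
  (forall i, (i < n)%nat -> f i <= M) -> sumN n f <= INR n * M.
Proof.
  induction n as [|n IH]; cbn [sumN]; intros H; [simpl; lra|].
  assert (sumN n f <= INR n * M) by (apply IH; intros; apply H; lia).
  pose proof (H n (Nat.lt_succ_diag_r n)); rewrite S_INR; lra.
Qed.

Section DistanceToA.
Variables (N : nat) (x : State).

Definition dist_candidate (d : R) : Prop :=
  exists (a : nat -> R) (l : nat), in_As N a /\
    d = sqrt (sumN N (fun i => (fst x i - a i) ^ 2) + (INR (snd x) - INR l) ^ 2).

Lemma Glb_dist_candidate : Glb_Rbar dist_candidate = Finite (distA N x).
Proof.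
  unfold distA; fold dist_candidate.
  destruct (Glb_Rbar_correct dist_candidate) as [Hlb Hglb].
  assert (Hcand : dist_candidate (sqrt (sumN N (fun i => (fst x i - 0) ^ 2)
                                        + (INR (snd x) - INR (snd x)) ^ 2))).
  { exists (fun _ => 0), (snd x); split; [|reflexivity].
    left; exists 0; split; [lra|reflexivity]. }
  assert (H0 : Rbar_le 0 (Glb_Rbar dist_candidate)).
  { apply Hglb; intros d [a [l [_ ->]]]; apply sqrt_pos. }
  pose proof (Hlb _ Hcand) as Hup.
  destruct (Glb_Rbar dist_candidate); simpl in *; tauto.
Qed.

Lemma distA_le_candidate (d : R) : dist_candidate d -> distA N x <= d.
Proof.
  intros Hd; pose proof (proj1 (Glb_Rbar_correct dist_candidate) d Hd) as H.
  now rewrite Glb_dist_candidate in H.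
Qed.

Lemma distA_nonneg : 0 <= distA N x.
Proof.
  assert (H : Rbar_le 0 (Glb_Rbar dist_candidate)).
  { apply (proj2 (Glb_Rbar_correct dist_candidate)); intros d [a [l [_ ->]]]; apply sqrt_pos. }
  now rewrite Glb_dist_candidate in H.
Qed.

Lemma distA_le_sup (a : nat -> R) (M : R) :
  in_As N a -> 0 <= M -> (forall i, (i < N)%nat -> Rabs (fst x i - a i) <= M) ->
  distA N x <= INR N * M.
Proof.
  intros Ha HM H.
  eapply Rle_trans; [apply distA_le_candidate; exists a, (snd x); split; [exact Ha|reflexivity]|].
  replace ((INR (snd x) - INR (snd x)) ^ 2) with 0 by ring; rewrite Rplus_0_r.
  assert (Hs : sumN N (fun i => (fst x i - a i) ^ 2) <= INR N * (M * M)).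
  { apply sumN_le_const; intros i Hi; specialize (H i Hi).
    rewrite <- Rsqr_pow2, Rsqr_abs; unfold Rsqr.
    pose proof (Rabs_pos (fst x i - a i)); nra. }
  assert (HN : INR N <= INR N * INR N).
  { destruct N as [|n]; [simpl; lra|]; pose proof (pos_INR n); rewrite S_INR; nra. }
  pose proof (pos_INR N).
  rewrite <- (sqrt_square (INR N * M)) by nra.
  apply sqrt_le_1_alt; nra.
Qed.

Lemma distA_zero : in_As N (fst x) -> distA N x = 0.
Proof.
  intros H; apply Rle_antisym; [|apply distA_nonneg].
  replace 0 with (INR N * 0) by ring.
  apply (distA_le_sup (fst x)); [exact H|lra|].
  intros; rewrite Rminus_diag, Rabs_R0; lra.
Qed.

Lemma distA_witness (eps : R) : 0 < eps -> exists a, in_As N a /\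
  forall i, (i < N)%nat -> Rabs (fst x i - a i) < distA N x + eps.
Proof.
  intros Heps.
  assert (Happrox : exists d, dist_candidate d /\ d < distA N x + eps).
  { apply NNPP; intros Hno.
    assert (H : Rbar_le (distA N x + eps) (Glb_Rbar dist_candidate)).
    { apply (proj2 (Glb_Rbar_correct dist_candidate)); intros d Hd.
      apply Rnot_lt_le; intros Hlt; apply Hno; eauto. }
    rewrite Glb_dist_candidate in H; simpl in H; lra. }
  destruct Happrox as [d [[a [l [Ha ->]]] Hd]].
  exists a; split; [exact Ha|]; intros i Hi; eapply Rle_lt_trans; [|exact Hd].
  rewrite <- sqrt_Rsqr_abs; apply sqrt_le_1_alt.
  assert (Hterm : (fst x i - a i) ^ 2 <= sumN N (fun i => (fst x i - a i) ^ 2)).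
  { apply (sumN_term_le N (fun i => (fst x i - a i) ^ 2)); [intros; apply pow2_ge_0|exact Hi]. }
  pose proof (pow2_ge_0 (INR (snd x) - INR l)); rewrite Rsqr_pow2; lra.
Qed.

End DistanceToA.

(* All timers lie within [D] of one point of the circle [R/Z]. *)
Definition clustered (N : nat) (tau : nat -> R) (D : R) : Prop :=
  exists mu, forall i, (i < N)%nat -> exists z : Z, Rabs (tau i + IZR z - mu) <= D.

Lemma clustered_shift (N : nat) (a b : nat -> R) (D c : R) :
  (forall i, (i < N)%nat -> b i = a i + c) -> clustered N a D -> clustered N b D.
Proof.
  intros Hb [mu H]; exists (mu + c); intros i Hi.
  destruct (H i Hi) as [z Hz]; exists z; rewrite Hb by exact Hi.
  now replace (a i + c + IZR z - (mu + c)) with (a i + IZR z - mu) by ring.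
Qed.

Lemma clustered_jump (N : nat) (r : nat -> R) (El : nat -> nat -> Prop) (i : nat)
    (b a : nat -> R) (D : R) :
  jump_by N r El i b a -> clustered N b D -> clustered N a D.
Proof.
  intros [Hi [Hb [Ha Hj]]] [mu H]; exists mu.
  destruct (H i Hi) as [zi Hzi]; rewrite Hb in Hzi.
  assert (Hreset : Rabs (0 + IZR (zi + 1) - mu) <= D).
  { rewrite plus_IZR; now replace (0 + (IZR zi + 1) - mu) with (1 + IZR zi - mu) by ring. }
  intros j Hjn; destruct (Nat.eq_dec j i) as [->|Hne]; [rewrite Ha; now exists (zi + 1)%Z|].
  destruct (Hj j Hjn Hne) as [Hhit Hmiss]; destruct (classic (El i j)) as [He|He].
  - destruct (Hhit He) as [[-> _]|[-> _]]; [now exists (zi + 1)%Z|now exists zi].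
  - rewrite (Hmiss He); apply H, Hjn.
Qed.

Lemma clustered_of_distA (N : nat) (x : State) (eps : R) :
  0 < eps -> clustered N (fst x) (distA N x + eps).
Proof.
  intros Heps; destruct (distA_witness N x eps Heps) as [a [[[mu [_ Ha]]|Ha] Hd]].
  - exists mu; intros i Hi; exists 0%Z; rewrite Rplus_0_r, <- (Ha i Hi); left; apply Hd, Hi.
  - exists 0; intros i Hi; destruct (Ha i Hi) as [H0|H1].
    + exists 0%Z; rewrite Rplus_0_r, Rminus_0_r, <- (Rminus_0_r (fst x i)), <- H0.
      left; apply Hd, Hi.
    + exists (-1)%Z.
      replace (fst x i + IZR (-1) - 0) with (fst x i - a i) by (rewrite H1; simpl; ring).
      left; apply Hd, Hi.
Qed.

Lemma Rabs_le_bounds (a D : R) : Rabs a <= D -> - D <= a <= D.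
Proof.
  intros H; pose proof (Rle_abs a); pose proof (Rle_abs (- a)).
  rewrite Rabs_Ropp in *; lra.
Qed.

(* Either some timer sits away from the reset point 0 ~ 1, and then all timers are near it
   (consensus), or all timers are within [4 D] of [{0, 1}]. *)
Lemma distA_le_clustered (N : nat) (x : State) (D : R) :
  (forall i, (i < N)%nat -> 0 <= fst x i <= 1) -> 0 <= D ->
  clustered N (fst x) D -> distA N x <= INR N * (4 * D).
Proof.
  intros Hc HD [mu HQ].
  destruct (classic (exists i0, (i0 < N)%nat /\ 4 * D < fst x i0 < 1 - 4 * D))
    as [[i0 [Hi0 Hmid]]|Hnone].
  - apply (distA_le_sup N x (fun _ => fst x i0)); [|lra|].
    + left; exists (fst x i0); split; [apply Hc, Hi0|reflexivity].
    + intros j Hj; destruct (HQ j Hj) as [zj Hzj]; destruct (HQ i0 Hi0) as [zi Hzi].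
      pose proof (Hc j Hj); apply Rabs_le.
      apply Rabs_le_bounds in Hzj; apply Rabs_le_bounds in Hzi.
      destruct (Z.lt_trichotomy zj zi) as [Hlt|[->|Hgt]].
      * apply IZR_lt in Hlt; assert (IZR zj <= IZR zi - 1)
          by (rewrite <- minus_IZR; apply IZR_le; apply lt_IZR in Hlt; lia); lra.
      * lra.
      * apply IZR_lt in Hgt; assert (IZR zi + 1 <= IZR zj)
          by (rewrite <- plus_IZR; apply IZR_le; apply lt_IZR in Hgt; lia); lra.
  - apply (distA_le_sup N x (fun i => if Rle_dec (fst x i) (1 / 2) then 0 else 1)); [|lra|].
    + right; intros i Hi; destruct (Rle_dec (fst x i) (1 / 2)); auto.
    + intros i Hi; pose proof (Hc i Hi); apply Rabs_le.
      assert (fst x i <= 4 * D \/ 1 - 4 * D <= fst x i).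
      { apply NNPP; intros Hn; apply Hnone; exists i; split; [exact Hi|lra]. }
      destruct (Rle_dec (fst x i) (1 / 2)); lra.
Qed.

(** * Solutions as discrete runs *)

Definition continuous_within (D : R -> Prop) (h : R -> R) (p : R) : Prop :=
  forall eps, 0 < eps -> exists delta, 0 < delta /\
    forall u, D u -> Rabs (u - p) < delta -> Rabs (h u - h p) < eps.

Lemma continuous_within_closeby (D : R -> Prop) (h : R -> R) (p : R) (P : R -> Prop) :
  continuous_within D h p ->
  (forall delta, 0 < delta -> exists u, D u /\ Rabs (u - p) < delta /\ P (h u)) ->
  forall eps, 0 < eps -> exists v, P v /\ Rabs (h p - v) < eps.
Proof.
  intros Hc Hnear eps Heps.
  destruct (Hc eps Heps) as [delta [Hdelta Hball]].
  destruct (Hnear delta Hdelta) as [u [Du [Hu HPu]]].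
  exists (h u); split; [exact HPu|rewrite Rabs_minus_sym; apply Hball; assumption].
Qed.

Lemma interior_points_near (a b p delta : R) :
  a < b -> a <= p <= b -> 0 < delta -> exists u, a < u < b /\ Rabs (u - p) < delta.
Proof.
  intros Hab Hp Hdelta.
  set (e := Rmin delta (b - a) / 3).
  assert (He : 0 < e /\ e < delta /\ 2 * e < b - a).
  { unfold e; pose proof (Rmin_l delta (b - a)); pose proof (Rmin_r delta (b - a)).
    assert (0 < Rmin delta (b - a)) by (apply Rmin_pos; lra); lra. }
  destruct (Rlt_dec p (a + e));
    [exists (a + e)|destruct (Rlt_dec (b - e) p); [exists (b - e)|exists p]];
    (split; [lra|apply Rabs_def1; lra]).
Qed.

Lemma affine_on_interval (f : R -> R) (D : R -> Prop) (a b T : R) :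
  0 < T -> a <= b -> (forall s, a <= s <= b -> D s) ->
  (forall s, D s -> continuous_within D f s) ->
  (forall u, a < u < b -> derivable_pt_lim f u (/ T)) ->
  forall s, a <= s <= b -> f s = f a + (s - a) / T.
Proof.
  intros HT Hab HD Hc Hd.
  destruct (Req_dec a b) as [<-|Hne].
  { intros s Hs; replace s with a by lra; field; lra. }
  set (h := fun u => f u - u / T).
  set (m := (a + b) / 2).
  assert (Hmid : forall u, a < u < b -> h u = h m).
  { assert (Hmvt : forall u v, a < u -> u < v -> v < b -> h u = h v).
    { intros u v Hu Huv Hv.
      destruct (MVT_cor2 f (fun _ => / T) u v Huv) as [c [Hfc _]]; [intros; apply Hd; lra|].
      unfold h; replace (f v) with (f u + / T * (v - u)) by lra; field; lra. }
    intros u Hu; destruct (Rtotal_order u m) as [Hlt|[->|Hgt]];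
      [apply Hmvt; unfold m in *; lra|reflexivity|symmetry; apply Hmvt; unfold m in *; lra]. }
  assert (Hhc : forall p, D p -> continuous_within D h p).
  { intros p Dp eps Heps; destruct (Hc p Dp (eps / 2)) as [d [Hd0 Hball]]; [lra|].
    exists (Rmin d (eps * T / 2)); split; [apply Rmin_pos; [lra|nra]|].
    intros u Du Hup; pose proof (Rmin_l d (eps * T / 2)); pose proof (Rmin_r d (eps * T / 2)).
    specialize (Hball u Du ltac:(lra)); apply Rabs_def2 in Hball.
    assert (Hdiv : Rabs ((u - p) / T) < eps / 2).
    { unfold Rdiv at 1; rewrite Rabs_mult, Rabs_inv, (Rabs_pos_eq T) by lra.
      apply (Rmult_lt_reg_r T); [lra|]; rewrite Rmult_assoc, Rinv_l by lra; nra. }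
    apply Rabs_def2 in Hdiv; apply Rabs_def1; unfold h;
      replace ((u - p) / T) with (u / T - p / T) in Hdiv by (field; lra); lra. }
  assert (Hconst : forall s, a <= s <= b -> h s = h m).
  { intros s Hs; apply eq_of_close; intros eps Heps.
    destruct (continuous_within_closeby D h s (fun v => v = h m) (Hhc s (HD s Hs)))
      with (eps := eps) as [v [-> Hv]]; [|exact Heps|exact Hv].
    intros delta Hdelta; destruct (interior_points_near a b s delta) as [u [Hu Hus]]; try lra.
    exists u; split; [apply HD; lra|split; [exact Hus|apply Hmid, Hu]]. }
  intros s Hs; assert (Hsa : h s = h a) by (rewrite (Hconst a), (Hconst s); lra).
  unfold h in Hsa; field_simplify; [|lra].
  replace (f s) with (f a + s / T - a / T) by lra; field; lra.
Qed.

(* [A k] and [B k] are the timers at the start and at the end of the [k]-th flow interval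
   [[sg k, sg (S k)]]; the [k]-th jump is triggered by agent [fire k] with edge set [El k]. *)
Record run (N : nat) (T : R) (r : nat -> R) (El : nat -> nat -> nat -> Prop) (K : nat)
    (sg : nat -> R) (A B : nat -> nat -> R) (fire : nat -> nat) : Prop := {
  run_time_mono : forall k, (k <= K)%nat -> sg k <= sg (S k);
  run_A_range : forall k i, (k <= K)%nat -> (i < N)%nat -> 0 <= A k i <= 1;
  run_B_range : forall k i, (k <= K)%nat -> (i < N)%nat -> 0 <= B k i <= 1;
  run_flow : forall k i, (k <= K)%nat -> (i < N)%nat -> B k i = A k i + (sg (S k) - sg k) / T;
  run_jump : forall k, (k < K)%nat -> jump_by N r (El k) (fire k) (B k) (A (S k)) }.
Arguments run_time_mono {N T r El K sg A B fire}.
Arguments run_A_range {N T r El K sg A B fire}.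
Arguments run_B_range {N T r El K sg A B fire}.
Arguments run_flow {N T r El K sg A B fire}.
Arguments run_jump {N T r El K sg A B fire}.

Section SolutionOnGrid.
Variables (N : nat) (T : R) (r : nat -> R) (xi : nat -> nat -> nat -> Prop).
Variables (x : R -> nat -> State) (dom : R -> nat -> Prop) (K : nat) (tt : nat -> R).
Hypothesis HT : 0 < T.
Hypothesis Hsol : is_solution N T r xi x dom.
Hypothesis tt_0 : tt O = 0.
Hypothesis tt_mono : forall k, (k <= K)%nat -> tt k <= tt (S k).
Hypothesis tt_dom : forall k s, (k <= K)%nat -> tt k <= s <= tt (S k) -> dom s k.

Lemma grid_interior (k : nat) (u : R) :
  (k <= K)%nat -> tt k < u < tt (S k) -> interior_pt dom u k.
Proof.
  intros Hk Hu; exists (tt k), (tt (S k)); split; [exact Hu|].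
  split; apply tt_dom; auto; lra.
Qed.

Lemma grid_affine (k i : nat) (s : R) :
  (k <= K)%nat -> (i < N)%nat -> tt k <= s <= tt (S k) ->
  fst (x s k) i = fst (x (tt k) k) i + (s - tt k) / T.
Proof.
  intros Hk Hi; destruct Hsol as [_ [_ [_ [Hcont [_ [Hflow _]]]]]].
  apply (affine_on_interval (fun s => fst (x s k) i) (fun s => dom s k)); auto.
  - intros s' Ds'; exact (Hcont k s' Ds' i Hi).
  - intros u Hu; apply (proj2 (Hflow k u (grid_interior k u Hk Hu))), Hi.
Qed.

Lemma grid_end_le_1 (k i : nat) :
  (k <= K)%nat -> (i < N)%nat -> fst (x (tt k) k) i <= 1 -> fst (x (tt (S k)) k) i <= 1.
Proof.
  intros Hk Hi Hstart; pose proof (tt_mono k Hk) as Hle.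
  destruct (Req_dec (tt k) (tt (S k))) as [<-|Hne]; [exact Hstart|].
  destruct Hsol as [_ [_ [_ [Hcont [_ [Hflow _]]]]]].
  apply Rle_plus_epsilon; intros eps Heps.
  destruct (continuous_within_closeby (fun s => dom s k) (fun s => fst (x s k) i) (tt (S k))
              (fun v => v <= 1) (Hcont k (tt (S k)) (tt_dom k (tt (S k)) Hk ltac:(lra)) i Hi))
    with (eps := eps) as [v [Hv Hclose]]; [|exact Heps|apply Rabs_def2 in Hclose; lra].
  intros delta Hdelta.
  destruct (interior_points_near (tt k) (tt (S k)) (tt (S k)) delta) as [u [Hu Hclose]]; try lra.
  exists u; split; [apply tt_dom; auto; lra|split; [exact Hclose|]].
  apply (proj1 (Hflow k u (grid_interior k u Hk Hu))), Hi.
Qed.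

Lemma grid_lambda (k : nat) : (k <= K)%nat -> snd (x (tt k) k) = (snd (x 0%R O) + k)%nat.
Proof.
  destruct Hsol as [_ [_ [_ [_ [Hlam [_ Hjump]]]]]].
  induction k as [|k IH]; intros Hk; [rewrite tt_0; lia|].
  pose proof (tt_mono k ltac:(lia)); pose proof (tt_mono (S k) Hk).
  assert (D0 : dom (tt k) k) by (apply tt_dom; [lia|lra]).
  assert (D1 : dom (tt (S k)) k) by (apply tt_dom; [lia|lra]).
  destruct (Hjump (tt (S k)) k D1 (tt_dom (S k) (tt (S k)) Hk ltac:(lra))) as [_ [_ ->]].
  rewrite (Hlam k _ (tt k) D1 D0), IH by lia; lia.
Qed.

Lemma grid_jump (k : nat) :
  (k < K)%nat ->
  inD N (x (tt (S k)) k) /\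
  exists i, jump_by N r (xi (snd (x 0%R O) + k)%nat) i
              (fst (x (tt (S k)) k)) (fst (x (tt (S k)) (S k))).
Proof.
  intros Hk; pose proof (tt_mono k ltac:(lia)); pose proof (tt_mono (S k) Hk).
  assert (D0 : dom (tt k) k) by (apply tt_dom; [lia|lra]).
  assert (D1 : dom (tt (S k)) k) by (apply tt_dom; [lia|lra]).
  destruct Hsol as [_ [_ [_ [_ [Hlam [_ Hjump]]]]]].
  destruct (Hjump _ _ D1 (tt_dom (S k) (tt (S k)) Hk ltac:(lra))) as [HD [HG _]].
  split; [exact HD|]; apply Gmap_jump_by.
  rewrite (Hlam k _ (tt k) D1 D0), grid_lambda in HG by lia.
  exact HG.
Qed.

Lemma grid_range (k : nat) :
  (k <= K)%nat -> forall i, (i < N)%nat -> 0 <= fst (x (tt k) k) i <= 1.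
Proof.
  induction k as [|k IH]; intros Hk i Hi.
  - rewrite tt_0; destruct Hsol as [_ [_ [[Hc|[Hc _]] _]]]; apply Hc, Hi.
  - destruct (grid_jump k Hk) as [[Hc _] [j Hj]].
    exact (jump_by_range N r _ j _ _ Hj Hc i Hi).
Qed.

End SolutionOnGrid.

Lemma solution_run (N : nat) (T : R) (r : nat -> R) (xi : nat -> nat -> nat -> Prop)
    (x : R -> nat -> State) (dom : R -> nat -> Prop) (t : R) (K : nat) :
  0 < T -> is_solution N T r xi x dom -> dom t K ->
  exists sg fire, sg O = 0 /\ sg (S K) = t /\
    run N T r (fun k => xi (snd (x 0%R O) + k)%nat) K sg
      (fun k => fst (x (sg k) k)) (fun k => fst (x (sg (S k)) k)) fire.
Proof.
  intros HT Hsol Hd.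
  destruct (proj1 Hsol t K Hd) as [J [tt [tt_0 [Hmono Hiff]]]].
  assert (HK : (K <= J)%nat /\ tt K <= t <= tt (S K)) by (apply Hiff; repeat split; auto; lra).
  assert (Hgrid : forall k s, (k <= K)%nat -> tt k <= s <= tt (S k) -> dom s k /\ s <= t).
  { intros k s Hk Hs; assert (H : (k <= J)%nat /\ tt k <= s <= tt (S k)) by (split; [lia|exact Hs]).
    apply Hiff in H; tauto. }
  assert (tt_mono : forall k, (k <= K)%nat -> tt k <= tt (S k)) by (intros; apply Hmono; lia).
  assert (tt_end : tt (S K) = t).
  { pose proof (tt_mono K (le_n K)).
    pose proof (proj2 (Hgrid K (tt (S K)) (le_n K) ltac:(lra))); lra. }
  assert (tt_dom : forall k s, (k <= K)%nat -> tt k <= s <= tt (S k) -> dom s k)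
    by (intros; apply Hgrid; assumption).
  destruct (functional_choice (fun k i => (k < K)%nat ->
              jump_by N r (xi (snd (x 0%R O) + k)%nat) i
                (fst (x (tt (S k)) k)) (fst (x (tt (S k)) (S k))))) as [fire Hfire].
  { intros k; destruct (Nat.lt_ge_cases k K) as [Hk|Hk].
    - destruct (grid_jump N T r xi x dom K tt Hsol tt_0 tt_mono tt_dom k Hk) as [_ [i Hi]].
      exists i; intros; exact Hi.
    - exists O; lia. }
  exists tt, fire; split; [exact tt_0|split; [exact tt_end|]].
  pose proof (grid_range N T r xi x dom K tt Hsol tt_0 tt_mono tt_dom) as Hrange.
  assert (Haff := grid_affine N T r xi x dom K tt HT Hsol tt_mono tt_dom).
  split; auto.
  - intros k i Hk Hi; specialize (Hrange k Hk i Hi); pose proof (tt_mono k Hk).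
    rewrite (Haff k i (tt (S k))) by (auto; lra); split.
    + assert (0 <= (tt (S k) - tt k) / T)
        by (apply Rmult_le_pos; [lra|left; apply Rinv_0_lt_compat, HT]); lra.
    + rewrite <- (Haff k i (tt (S k))) by (auto; lra).
      apply (grid_end_le_1 N T r xi x dom K tt Hsol tt_mono tt_dom); auto; lra.
  - intros k i Hk Hi; apply Haff; auto; pose proof (tt_mono k Hk); lra.
Qed.

(** * Stability *)

Lemma run_clustered (N : nat) (T : R) (r : nat -> R) (El : nat -> nat -> nat -> Prop) (K : nat)
    (sg : nat -> R) (A B : nat -> nat -> R) (fire : nat -> nat) (D : R) :
  run N T r El K sg A B fire -> clustered N (A O) D ->
  forall k, (k <= K)%nat -> clustered N (B k) D.
Proof.
  intros Hrun H0 k; induction k as [|k IH]; intros Hk.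
  - exact (clustered_shift N _ _ D _ (fun i Hi => run_flow Hrun O i Hk Hi) H0).
  - apply (clustered_shift N (A (S k)) _ D _ (fun i Hi => run_flow Hrun (S k) i Hk Hi)).
    exact (clustered_jump N r _ _ _ _ D (run_jump Hrun k Hk) (IH ltac:(lia))).
Qed.

Lemma class_Kinf_linear (c : R) : 0 < c -> class_Kinf (fun s => c * s).
Proof.
  intros Hc; split; [ring|split; [|split]].
  - intros s Hs eps Heps; exists (eps / c); split; [apply Rdiv_lt_0_compat; assumption|].
    intros s' Hs' Hd; replace (c * s' - c * s) with (c * (s' - s)) by ring.
    rewrite Rabs_mult, (Rabs_pos_eq c) by lra.
    apply (Rmult_lt_reg_r (/ c)); [apply Rinv_0_lt_compat, Hc|].
    replace (c * Rabs (s' - s) * / c) with (Rabs (s' - s)) by (field; lra); exact Hd.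
  - intros s1 s2 H1 H2; nra.
  - intros M; exists ((Rabs M + 1) / c); pose proof (Rle_abs M); pose proof (Rabs_pos M); split.
    + apply Rmult_le_pos; [lra|left; apply Rinv_0_lt_compat, Hc].
    + replace (c * ((Rabs M + 1) / c)) with (Rabs M + 1) by (field; lra); lra.
Qed.

(* Jumps and flows both preserve how tightly the timers cluster on the circle [R/Z]. *)
Lemma UGS_holds (N : nat) (T : R) (r : nat -> R) (xi : nat -> nat -> nat -> Prop) :
  0 < T -> UGS N T r xi.
Proof.
  intros HT; pose proof (pos_INR N) as HN.
  exists (fun s => (4 * INR N + 1) * s); split; [apply class_Kinf_linear; lra|].
  intros x dom Hsol t K Hd.
  destruct (solution_run N T r xi x dom t K HT Hsol Hd) as [sg [fire [Hs0 [HsK Hrun]]]].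
  set (d := distA N (x 0 O)); pose proof (distA_nonneg N (x 0 O)) as Hd0; fold d in Hd0.
  assert (Hbound : forall eps, 0 < eps -> distA N (x t K) <= INR N * (4 * (d + eps))).
  { intros eps Heps; rewrite <- HsK.
    apply distA_le_clustered; [intros i Hi; exact (run_B_range Hrun K i (le_n K) Hi)|lra|].
    apply (run_clustered _ _ _ _ _ _ _ _ _ _ Hrun); [simpl; rewrite Hs0|lia].
    apply clustered_of_distA, Heps. }
  apply Rle_plus_epsilon; intros e He.
  specialize (Hbound (e / (4 * INR N + 1)) ltac:(apply Rdiv_lt_0_compat; lra)).
  assert (INR N * (4 * (e / (4 * INR N + 1))) <= e).
  { replace (INR N * (4 * (e / (4 * INR N + 1)))) with (e - e / (4 * INR N + 1)) by (field; lra).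
    pose proof (Rdiv_lt_0_compat e (4 * INR N + 1) He ltac:(lra)); lra. }
  nra.
Qed.

(** * Synchronization *)

(* A firing timer (value 1) is identified with its reset value 0. *)
Definition wrap (v : R) : R := if Req_dec_T v 1 then 0 else v.

Lemma wrap_1 : wrap 1 = 0.
Proof. unfold wrap; destruct (Req_dec_T 1 1); [reflexivity|contradiction]. Qed.

Lemma wrap_0 : wrap 0 = 0.
Proof. unfold wrap; destruct (Req_dec_T 0 1); reflexivity. Qed.

Lemma wrap_neq_1 (v : R) : v <> 1 -> wrap v = v.
Proof. unfold wrap; destruct (Req_dec_T v 1); [contradiction|reflexivity]. Qed.

Lemma wrap_eq_0 (v : R) : wrap v = 0 -> v = 0 \/ v = 1.
Proof. unfold wrap; destruct (Req_dec_T v 1); auto. Qed.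

Definition synced (N : nat) (C : nat -> Prop) (i0 : nat) (tau : nat -> R) : Prop :=
  forall c, (c < N)%nat -> C c -> wrap (tau c) = wrap (tau i0).

Lemma synced_in_As (N : nat) (tau : nat -> R) (i0 : nat) :
  (forall i, (i < N)%nat -> 0 <= tau i <= 1) -> synced N (fun _ => True) i0 tau -> in_As N tau.
Proof.
  intros Hrange Hs.
  destruct (classic (exists c, (c < N)%nat /\ tau c <> 0 /\ tau c <> 1))
    as [[c [Hc [H0 H1]]]|Hno].
  - left; exists (tau c); split; [apply Hrange, Hc|]; intros j Hj.
    assert (Hjc : wrap (tau j) = tau c)
      by (rewrite (Hs j Hj I), <- (Hs c Hc I); apply wrap_neq_1, H1).
    destruct (Req_dec (tau j) 1) as [Hj1|Hj1].
    + rewrite Hj1, wrap_1 in Hjc; symmetry in Hjc; contradiction.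
    + now rewrite wrap_neq_1 in Hjc.
  - right; intros i Hi; apply NNPP; intros Hn; apply Hno; exists i; split; [exact Hi|tauto].
Qed.

Section OneJump.
Variables (N : nat) (r : nat -> R) (El : nat -> nat -> Prop) (i : nat) (b a : nat -> R).
Hypothesis Hjump : jump_by N r El i b a.

Lemma jump_by_other (c : nat) : (c < N)%nat -> c <> i -> ~ El i c -> a c = b c.
Proof. intros Hc Hci Hn; destruct Hjump as [_ [_ [_ Hj]]]; exact (proj2 (Hj c Hc Hci) Hn). Qed.

Lemma jump_by_wrap_hit (c : nat) : (c < N)%nat -> c = i \/ El i c -> wrap (a c) = 0.
Proof.
  destruct Hjump as [_ [_ [Ha Hj]]]; intros Hc Hhit.
  destruct (Nat.eq_dec c i) as [->|Hci]; [rewrite Ha; apply wrap_0|].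
  destruct Hhit as [|He]; [contradiction|].
  destruct (proj1 (Hj c Hc Hci) He) as [[-> _]|[-> _]]; [apply wrap_0|apply wrap_1].
Qed.

Lemma jump_by_le_or_threshold (j : nat) : (j < N)%nat -> 0 <= b j -> a j <= b j \/ r j <= b j.
Proof.
  destruct Hjump as [_ [Hb [Ha Hj]]]; intros Hjn Hb0.
  destruct (Nat.eq_dec j i) as [->|Hji]; [left; lra|].
  destruct (classic (El i j)) as [He|He].
  - destruct (proj1 (Hj j Hjn Hji) He) as [[-> _]|[_ Hle]]; [left|right]; lra.
  - left; rewrite (jump_by_other j Hjn Hji He); lra.
Qed.

Section Cluster.
Variables (C : nat -> Prop) (i0 : nat).
Hypotheses (Hi0 : (i0 < N)%nat) (HCi0 : C i0).

Lemma jump_synced_from_firing :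
  C i -> synced N C i0 b -> synced N (fun c => C c \/ El i c) i0 a.
Proof.
  intros HCi Hs.
  assert (Hzero : forall c, (c < N)%nat -> C c \/ El i c -> wrap (a c) = 0).
  { intros c Hc [HCc|He]; [|apply jump_by_wrap_hit; auto].
    destruct (Nat.eq_dec c i) as [->|Hci]; [apply jump_by_wrap_hit; auto|].
    destruct (classic (El i c)) as [He|He]; [apply jump_by_wrap_hit; auto|].
    destruct Hjump as [Hi [Hb _]].
    rewrite (jump_by_other c Hc Hci He), (Hs c Hc HCc), <- (Hs i Hi HCi), Hb; apply wrap_1. }
  intros c Hc Hin; rewrite (Hzero c Hc Hin), (Hzero i0 Hi0 (or_introl HCi0)); reflexivity.
Qed.

Lemma jump_synced_preserved :
  (forall j, El i j -> C i) -> synced N C i0 b -> synced N C i0 a.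
Proof.
  intros Hsrc Hs; destruct (classic (C i)) as [HCi|HnCi].
  - intros c Hc HCc; exact (jump_synced_from_firing HCi Hs c Hc (or_introl HCc)).
  - assert (Hkeep : forall c, (c < N)%nat -> C c -> a c = b c).
    { intros c Hc HCc; apply jump_by_other; [exact Hc|intros ->; contradiction|].
      intros He; exact (HnCi (Hsrc c He)). }
    intros c Hc HCc; rewrite (Hkeep c Hc HCc), (Hkeep i0 Hi0 HCi0); apply Hs; assumption.
Qed.

(* A hit timer of a synchronized cluster is already at 0 or 1, so it keeps its value. *)
Lemma jump_keeps_unfired (p : nat) :
  0 < r p < 1 -> (p < N)%nat -> p <> i -> C p ->
  (forall j, El i j -> C i) -> synced N C i0 b -> a p = b p.
Proof.
  intros Hrp Hp Hpi HCp Hsrc Hs.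
  destruct (classic (El i p)) as [He|He]; [|apply jump_by_other; assumption].
  destruct Hjump as [Hi [Hb [_ Hj]]].
  assert (Hwb : wrap (b p) = 0)
    by (rewrite (Hs p Hp HCp), <- (Hs i Hi (Hsrc p He)), Hb; apply wrap_1).
  destruct (wrap_eq_0 _ Hwb) as [Hb0|Hb1];
    destruct (proj1 (Hj p Hp Hpi) He) as [[-> ?]|[-> ?]]; lra.
Qed.

End Cluster.
End OneJump.

Fixpoint nsum (n : nat) (g : nat -> nat) : nat :=
  match n with
  | O => O
  | S m => (nsum m g + g m)%nat
  end.

Lemma nsum_count_occ (n : nat) (l : list nat) :
  (forall y, In y l -> (y < n)%nat) -> nsum n (count_occ Nat.eq_dec l) = length l.
Proof.
  assert (Hindicator : forall m y, nsum m (fun a => if Nat.eq_dec y a then 1 else 0)%nat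
                                   = if Nat.ltb y m then 1%nat else 0%nat).
  { induction m as [|m IH]; intros y; [reflexivity|]; simpl; rewrite IH.
    destruct (Nat.eq_dec y m) as [->|Hne].
    - rewrite Nat.ltb_irrefl, (proj2 (Nat.ltb_lt m (S m))) by lia; reflexivity.
    - destruct (Nat.ltb_spec y m), (Nat.ltb_spec y (S m)); lia. }
  induction l as [|y l IH]; intros Hl; simpl.
  - induction n as [|n IHn]; simpl; [reflexivity|]; rewrite IHn; [reflexivity|intros y []].
  - transitivity (nsum n (count_occ Nat.eq_dec l)
                  + nsum n (fun a => if Nat.eq_dec y a then 1 else 0))%nat.
    + clear; induction n as [|n IHn]; simpl; [reflexivity|]; rewrite IHn.
      destruct (Nat.eq_dec y n); lia.
    + rewrite IH, Hindicator by (intros; apply Hl; right; assumption).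
      rewrite (proj2 (Nat.ltb_lt y n)) by (apply Hl; left; reflexivity); lia.
Qed.

Lemma nsum_le_excluding (n : nat) (g : nat -> nat) (p m : nat) :
  (p < n)%nat -> g p = O -> (forall a, (a < n)%nat -> (g a <= m)%nat) ->
  (nsum n g + m <= n * m)%nat.
Proof.
  assert (Hbound : forall k, (forall a, (a < k)%nat -> (g a <= m)%nat) -> (nsum k g <= k * m)%nat).
  { induction k as [|k IH]; simpl; intros H; [lia|].
    pose proof (IH (fun a Ha => H a ltac:(lia))); pose proof (H k ltac:(lia)); lia. }
  induction n as [|n IH]; simpl; intros Hp Hgp Hg; [lia|].
  destruct (Nat.eq_dec p n) as [->|Hne].
  - rewrite Hgp; pose proof (Hbound n (fun a Ha => Hg a ltac:(lia))); lia.
  - pose proof (IH ltac:(lia) Hgp (fun a Ha => Hg a ltac:(lia))); pose proof (Hg n ltac:(lia)); lia.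
Qed.

Section Synchronization.
Variables (N : nat) (T : R) (r : nat -> R) (El : nat -> nat -> nat -> Prop) (K : nat).
Variables (sg : nat -> R) (A B : nat -> nat -> R) (fire : nat -> nat).
Hypothesis HT : 0 < T.
Hypothesis Hr : forall j, (j < N)%nat -> 0 < r j < 1.
Hypothesis Hrun : run N T r El K sg A B fire.

Lemma run_sg_mono (k k' : nat) : (k <= k')%nat -> (k' <= S K)%nat -> sg k <= sg k'.
Proof.
  intros Hkk'; induction k' as [|k' IH]; intros Hk'.
  - replace k with O by lia; lra.
  - destruct (Nat.eq_dec k (S k')) as [->|Hne]; [lra|].
    pose proof (run_time_mono Hrun k' ltac:(lia)); specialize (IH ltac:(lia) ltac:(lia)); lra.
Qed.

Lemma run_flow_synced (C : nat -> Prop) (i0 k : nat) :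
  (k <= K)%nat -> (i0 < N)%nat -> synced N C i0 (A k) -> synced N C i0 (B k).
Proof.
  intros Hk Hi0 Hs c Hc HCc.
  rewrite !(run_flow Hrun k) by assumption.
  destruct (Req_dec (sg (S k)) (sg k)) as [->|Hne].
  - rewrite Rminus_diag, Rdiv_0_l, !Rplus_0_r; apply Hs; assumption.
  - pose proof (run_time_mono Hrun k Hk).
    assert (Hdt : 0 < (sg (S k) - sg k) / T) by (apply Rdiv_lt_0_compat; lra).
    assert (Hlt : forall j, (j < N)%nat -> A k j <> 1).
    { intros j Hj; pose proof (run_B_range Hrun k j Hk Hj).
      rewrite (run_flow Hrun k j Hk Hj) in *; lra. }
    specialize (Hs c Hc HCc); rewrite !wrap_neq_1 in Hs by (apply Hlt; assumption).
    now rewrite Hs.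
Qed.

Lemma run_synced_persist (C : nat -> Prop) (i0 k d : nat) :
  (i0 < N)%nat -> C i0 -> (k + d <= K)%nat ->
  (forall k', (k <= k' < k + d)%nat -> forall a b, El k' a b -> C a) ->
  synced N C i0 (A k) -> synced N C i0 (A (k + d)%nat).
Proof.
  intros Hi0 HCi0; induction d as [|d IH]; intros Hd Hsrc Hs; [now rewrite Nat.add_0_r|].
  rewrite Nat.add_succ_r.
  apply (jump_synced_preserved N r (El (k + d)%nat) (fire (k + d)%nat) (B (k + d)%nat));
    [apply (run_jump Hrun); lia|assumption|assumption|intros j; apply Hsrc; lia|].
  apply run_flow_synced; [lia|assumption|].
  apply IH; [lia|intros k' Hk'; apply Hsrc; lia|exact Hs].
Qed.

(* After firing, agent [p] is at 0; until the next firing its timer grows at rate [1/T]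
   and can only jump to 1 once it has passed its threshold [r p]. *)
Lemma run_firing_separation (p k1 k2 : nat) :
  fire k1 = p -> fire k2 = p -> (k1 < k2)%nat -> (k2 < K)%nat ->
  r p * T <= sg (S k2) - sg (S k1).
Proof.
  intros Hf1 Hf2 H12 H2K.
  destruct (run_jump Hrun k1 ltac:(lia)) as [Hp [_ [HA1 _]]]; rewrite Hf1 in Hp, HA1.
  destruct (run_jump Hrun k2 H2K) as [_ [HB2 _]]; rewrite Hf2 in HB2.
  assert (Hrp := Hr p Hp).
  assert (Hinv : forall d, (S k1 + d <= k2)%nat ->
    B (S k1 + d)%nat p <= (sg (S (S k1 + d)) - sg (S k1)) / T \/
    r p * T <= sg (S (S k1 + d)) - sg (S k1)).
  { induction d as [|d IH]; intros Hd.
    - left; rewrite Nat.add_0_r, (run_flow Hrun (S k1) p ltac:(lia) Hp), HA1; lra.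
    - rewrite Nat.add_succ_r; set (m := (S k1 + d)%nat) in *.
      specialize (IH ltac:(lia)).
      pose proof (run_B_range Hrun m p ltac:(lia) Hp) as [HBm0 _].
      pose proof (run_time_mono Hrun (S m) ltac:(lia)).
      pose proof (run_sg_mono (S k1) (S m) ltac:(lia) ltac:(lia)).
      rewrite (run_flow Hrun (S m) p ltac:(lia) Hp).
      assert (Hsplit : (sg (S (S m)) - sg (S k1)) / T
                       = (sg (S m) - sg (S k1)) / T + (sg (S (S m)) - sg (S m)) / T)
        by (field; lra).
      assert (Hdt : 0 <= (sg (S (S m)) - sg (S m)) / T)
        by (apply Rmult_le_pos; [lra|left; apply Rinv_0_lt_compat, HT]).
      destruct (jump_by_le_or_threshold N r _ _ _ _ (run_jump Hrun m ltac:(lia)) p Hp HBm0)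
        as [Hle|Hle]; destruct IH as [IH|IH]; try (right; lra).
      + left; lra.
      + right; apply (Rmult_le_compat_r T) in IH; [|lra].
        replace ((sg (S m) - sg (S k1)) / T * T) with (sg (S m) - sg (S k1)) in IH by (field; lra).
        nra. }
  destruct (Hinv (k2 - S k1)%nat ltac:(lia)) as [H|H];
    replace (S k1 + (k2 - S k1))%nat with k2 in H by lia; [|exact H].
  rewrite HB2 in H; apply (Rmult_le_compat_r T) in H; [|lra].
  replace ((sg (S k2) - sg (S k1)) / T * T) with (sg (S k2) - sg (S k1)) in H by (field; lra).
  nra.
Qed.

Definition firings (p k0 n : nat) : nat := count_occ Nat.eq_dec (map fire (seq k0 n)) p.

Lemma firings_spread (p k0 n : nat) :
  (k0 + n <= K)%nat -> (0 < firings p k0 n)%nat ->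
  exists k2, (k0 <= k2 < k0 + n)%nat /\ fire k2 = p /\
    INR (firings p k0 n - 1) * (r p * T) <= sg (S k2) - sg k0.
Proof.
  induction n as [|n IH]; intros Hn Hpos; [unfold firings in Hpos; simpl in Hpos; lia|].
  assert (Hsplit : firings p k0 (S n)
                   = (firings p k0 n + if Nat.eq_dec (fire (k0 + n)) p then 1 else 0)%nat).
  { unfold firings; rewrite seq_S, map_app, count_occ_app; reflexivity. }
  rewrite Hsplit in *.
  destruct (Nat.eq_dec (fire (k0 + n)) p) as [Hf|Hf].
  - pose proof (run_sg_mono k0 (S (k0 + n)) ltac:(lia) ltac:(lia)).
    destruct (Nat.eq_dec (firings p k0 n) O) as [Hz|Hnz].
    + exists (k0 + n)%nat; split; [lia|split; [exact Hf|]]; rewrite Hz; simpl; lra.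
    + destruct (IH ltac:(lia) ltac:(lia)) as [k2 [Hk2 [Hf2 Hspread]]].
      exists (k0 + n)%nat; split; [lia|split; [exact Hf|]].
      pose proof (run_firing_separation p k2 (k0 + n) Hf2 Hf ltac:(lia) ltac:(lia)).
      replace (firings p k0 n + 1 - 1)%nat with (S (firings p k0 n - 1)) by lia.
      rewrite S_INR; lra.
  - rewrite Nat.add_0_r in *; destruct (IH ltac:(lia) Hpos) as [k2 [Hk2 Hrest]].
    exists k2; split; [lia|exact Hrest].
Qed.

Variables (rm : R) (Kc : nat).
Hypothesis Hrm : 0 < rm.
Hypothesis Hrm_le : forall i, (i < N)%nat -> rm <= r i.
Hypothesis HKc : 1 < INR Kc * rm.

Lemma firings_le_Kc (p k0 n : nat) :
  (p < N)%nat -> (k0 + n <= K)%nat ->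
  (forall k, (k0 <= k < k0 + n)%nat -> sg (S k) <= sg k0 + T) ->
  (firings p k0 n <= Kc)%nat.
Proof.
  intros Hp Hn Hwin; apply Nat.nlt_ge; intros Hlt.
  destruct (firings_spread p k0 n Hn ltac:(lia)) as [k2 [Hk2 [_ Hspread]]].
  assert (INR Kc <= INR (firings p k0 n - 1)) by (apply le_INR; lia).
  pose proof (Hwin k2 Hk2); pose proof (Hrm_le p Hp); pose proof (pos_INR Kc).
  assert (INR Kc * (rm * T) <= INR (firings p k0 n - 1) * (r p * T))
    by (apply Rmult_le_compat; nra).
  nra.
Qed.

(* Within time [T] every agent fires at most [Kc] times, too few for the other [N - 1]
   agents to account for [N * Kc] jumps. *)
Lemma quiet_agent_absurd (p k0 : nat) :
  (p < N)%nat -> (k0 + N * Kc <= K)%nat ->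
  (forall k, (k0 <= k < k0 + N * Kc)%nat -> fire k <> p) ->
  (forall k, (k0 <= k < k0 + N * Kc)%nat -> sg (S k) <= sg k0 + T) -> False.
Proof.
  intros Hp HK Hquiet Hwin.
  assert (HKc1 : (1 <= Kc)%nat) by (destruct Kc; [simpl in HKc; lra|lia]).
  assert (Htotal : nsum N (fun a => firings a k0 (N * Kc)) = length (map fire (seq k0 (N * Kc)))).
  { apply nsum_count_occ; intros y Hy; apply in_map_iff in Hy as [k [<- Hk]].
    apply in_seq in Hk; exact (proj1 (run_jump Hrun k ltac:(lia))). }
  rewrite length_map, length_seq in Htotal.
  assert (Hp0 : firings p k0 (N * Kc) = O).
  { apply count_occ_not_In; intros Hin; apply in_map_iff in Hin as [k [Hk Hin]].
    apply in_seq in Hin; exact (Hquiet k ltac:(lia) Hk). }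
  pose proof (nsum_le_excluding N (fun a => firings a k0 (N * Kc)) p Kc Hp Hp0
                (fun a Ha => firings_le_Kc a k0 (N * Kc) Ha HK Hwin)).
  lia.
Qed.

Lemma cluster_member_fires (C : nat -> Prop) (i0 kb p : nat) :
  (i0 < N)%nat -> C i0 -> (p < N)%nat -> C p -> (kb + N * Kc <= K)%nat ->
  (forall k, (kb <= k < kb + N * Kc)%nat -> forall a b, El k a b -> C a) ->
  synced N C i0 (A kb) ->
  exists k, (kb <= k < kb + N * Kc)%nat /\ fire k = p.
Proof.
  intros Hi0 HCi0 Hp HCp HK Hsrc Hs; apply NNPP; intros Hnone.
  assert (Hquiet : forall k, (kb <= k < kb + N * Kc)%nat -> fire k <> p)
    by (intros k Hk Hf; apply Hnone; exists k; auto).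
  assert (Hgrow : forall d, (d <= N * Kc)%nat ->
            A (kb + d)%nat p = A kb p + (sg (kb + d)%nat - sg kb) / T).
  { induction d as [|d IH]; intros Hd; [rewrite Nat.add_0_r; field; lra|].
    rewrite Nat.add_succ_r.
    assert (Hjump := run_jump Hrun (kb + d)%nat ltac:(lia)).
    rewrite (jump_keeps_unfired N r _ _ _ _ Hjump C i0 p (Hr p Hp) Hp).
    - rewrite (run_flow Hrun (kb + d)%nat p ltac:(lia) Hp), IH by lia; field; lra.
    - intros Heq; apply (Hquiet (kb + d)%nat); [lia|now rewrite Heq].
    - exact HCp.
    - intros j; apply Hsrc; lia.
    - apply run_flow_synced; [lia|exact Hi0|].
      apply run_synced_persist; [exact Hi0|exact HCi0|lia| |exact Hs].
      intros k Hk; apply Hsrc; lia. }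
  apply (quiet_agent_absurd p kb Hp HK Hquiet); intros k Hk.
  pose proof (run_B_range Hrun k p ltac:(lia) Hp) as [_ HB1].
  pose proof (run_A_range Hrun kb p ltac:(lia) Hp) as [HA0 _].
  rewrite (run_flow Hrun k p ltac:(lia) Hp) in HB1.
  replace k with (kb + (k - kb))%nat in HB1 by lia.
  rewrite Hgrow in HB1 by lia; replace (kb + (k - kb))%nat with k in HB1 by lia.
  assert (Hfrac : (sg k - sg kb) / T + (sg (S k) - sg k) / T <= 1) by lra.
  replace ((sg k - sg kb) / T + (sg (S k) - sg k) / T) with ((sg (S k) - sg kb) / T) in Hfrac
    by (field; lra).
  apply (Rmult_le_compat_r T) in Hfrac; [|lra].
  replace ((sg (S k) - sg kb) / T * T) with (sg (S k) - sg kb) in Hfrac by (field; lra); lra.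
Qed.

Lemma block_extends_sync (C C' : nat -> Prop) (i0 kb : nat) :
  (i0 < N)%nat -> C i0 -> (kb + N * Kc <= K)%nat ->
  (forall k, (kb <= k < kb + N * Kc)%nat -> forall a b, El k a b -> C a) ->
  (forall c, (c < N)%nat -> C' c -> C c \/
     exists p, (p < N)%nat /\ C p /\ forall k, (kb <= k < kb + N * Kc)%nat -> El k p c) ->
  synced N C i0 (A kb) -> synced N C' i0 (A (kb + N * Kc)%nat).
Proof.
  intros Hi0 HCi0 HK Hsrc Hnew Hs.
  assert (Hpersist : forall d, (d <= N * Kc)%nat -> synced N C i0 (A (kb + d)%nat))
    by (intros d Hd; apply run_synced_persist; auto; [lia|intros k Hk; apply Hsrc; lia]).
  intros c Hc HC'c; destruct (Hnew c Hc HC'c) as [HCc|[p [Hp [HCp Hhit]]]];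
    [apply Hpersist; auto|].
  destruct (cluster_member_fires C i0 kb p Hi0 HCi0 Hp HCp HK Hsrc Hs) as [k [Hk Hfk]].
  assert (Hafter : synced N (fun c => C c \/ El k p c) i0 (A (S k))).
  { assert (Hck : El k (fire k) c) by (rewrite Hfk; apply Hhit, Hk).
    rewrite <- Hfk; apply (jump_synced_from_firing N r (El k) (fire k) (B k) (A (S k)));
      [apply (run_jump Hrun); lia|exact Hi0|exact HCi0|exact (Hsrc k Hk _ _ Hck)|].
    apply run_flow_synced; [lia|exact Hi0|].
    replace k with (kb + (k - kb))%nat by lia; apply Hpersist; lia. }
  replace (kb + N * Kc)%nat with (S k + (kb + N * Kc - S k))%nat by lia.
  apply (run_synced_persist (fun c => C c \/ El k p c));
    [exact Hi0|now left|lia| |exact Hafter|exact Hc|].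
  - intros k' Hk' a b Hab; left; apply (Hsrc k' ltac:(lia) a b Hab).
  - right; apply Hhit, Hk.
Qed.

Lemma run_synchronizes (E : nat -> nat -> Prop) (istar qs k0 : nat) :
  simple_digraph N E -> is_root N E istar -> is_qstar N E istar qs ->
  (forall q m, (q < qs)%nat -> (m < N * Kc)%nat -> forall a b,
     El (k0 + q * (N * Kc) + m)%nat a b <-> Gq N E istar q a b) ->
  (k0 + qs * (N * Kc) <= K)%nat ->
  synced N (fun _ => True) istar (B K).
Proof.
  intros Hs Hroot Hqs HEl HK.
  assert (Hi : (istar < N)%nat) by apply Hroot.
  assert (Hball : forall q, (q <= qs)%nat ->
            synced N (reach_within E istar q) istar (A (k0 + q * (N * Kc))%nat)).
  { induction q as [|q IH]; intros Hq.
    - intros c Hc Hcq; now rewrite (reach_within_0 E istar c Hcq).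
    - set (kb := (k0 + q * (N * Kc))%nat).
      replace (k0 + S q * (N * Kc))%nat with (kb + N * Kc)%nat by (unfold kb; lia).
      assert (Hblock : forall k, (kb <= k < kb + N * Kc)%nat ->
                forall a b, El k a b <-> Gq N E istar q a b).
      { intros k Hk a b; replace k with (kb + (k - kb))%nat by lia; apply HEl; lia. }
      apply (block_extends_sync (reach_within E istar q)).
      + exact Hi.
      + apply reach_within_root.
      + assert (S q * (N * Kc) <= qs * (N * Kc))%nat by (apply Nat.mul_le_mono_r; lia).
        unfold kb; simpl in *; lia.
      + intros k Hk a b Hab; apply (Hblock k Hk) in Hab as [Hv _].
        exact (in_Vq_reach_within N E istar q a Hv).
      + intros c Hc Hc'.
        destruct (classic (reach_within E istar q c)) as [Hin|Hout]; [now left|right].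
        destruct (reach_within_S N E istar q c Hs Hc' Hout) as [p [Hp Hpc]].
        exists p; split; [apply Hp|split; [exact (in_Vq_reach_within N E istar q p Hp)|]].
        intros k Hk; apply Hblock; [exact Hk|split; assumption].
      + apply IH; lia. }
  assert (Hall : synced N (fun _ => True) istar (A (k0 + qs * (N * Kc))%nat)).
  { intros c Hc _.
    exact (Hball qs (le_n qs) c Hc (reach_within_qstar N E istar qs c Hroot Hqs Hc)). }
  apply run_flow_synced; [lia|exact Hi|].
  replace K with (k0 + qs * (N * Kc) + (K - (k0 + qs * (N * Kc))))%nat by lia.
  apply run_synced_persist; [exact Hi|exact I|lia|intros; exact I|exact Hall].
Qed.

End Synchronization.

(** * Attractivity *)

Lemma minR_le (n : nat) (r : nat -> R) (acc : R) (i : nat) : (i < n)%nat -> minR n r acc <= r i.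
Proof.
  induction n as [|n IH]; simpl; intros Hi; [lia|].
  destruct (Nat.eq_dec i n) as [->|Hne]; [apply Rmin_r|].
  eapply Rle_trans; [apply Rmin_l|apply IH; lia].
Qed.

Lemma minR_pos (n : nat) (r : nat -> R) (acc : R) :
  0 < acc -> (forall i, (i < n)%nat -> 0 < r i) -> 0 < minR n r acc.
Proof.
  induction n as [|n IH]; simpl; intros Hacc Hr; [exact Hacc|].
  apply Rmin_pos; [apply IH; auto|apply Hr; lia].
Qed.

Lemma lstar_spec (N : nat) (r : nat -> R) :
  (0 < N)%nat -> (forall i, (i < N)%nat -> 0 < r i) ->
  exists rm Kc, lstar N r = (N * Kc)%nat /\ 0 < rm /\
    (forall i, (i < N)%nat -> rm <= r i) /\ 1 < INR Kc * rm.
Proof.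
  intros HN Hr; set (rm := rmin N r).
  assert (Hrm : 0 < rm) by (apply minR_pos; [apply Hr|]; assumption).
  exists rm, (Z.to_nat (Int_part (/ rm)) + 1)%nat; split; [reflexivity|].
  split; [exact Hrm|split; [intros; apply minR_le; assumption|]].
  unfold Int_part; destruct (archimed (/ rm)) as [Hup _].
  assert (Hinv : 0 < / rm) by (apply Rinv_0_lt_compat, Hrm).
  assert (Hpos : (0 < up (/ rm))%Z) by (apply lt_IZR; lra).
  rewrite plus_INR, INR_IZR_INZ, Z2Nat.id, minus_IZR by lia; simpl.
  assert (/ rm * rm = 1) by (field; lra); nra.
Qed.

Lemma run_time_le (N : nat) (T : R) (r : nat -> R) (El : nat -> nat -> nat -> Prop) (K : nat)
    (sg : nat -> R) (A B : nat -> nat -> R) (fire : nat -> nat) :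
  0 < T -> (0 < N)%nat -> run N T r El K sg A B fire -> sg (S K) <= sg O + INR (S K) * T.
Proof.
  intros HT HN Hrun.
  assert (Hstep : forall k, (k <= K)%nat -> sg (S k) - sg k <= T).
  { intros k Hk; pose proof (run_A_range Hrun k O Hk HN) as [HA0 _].
    pose proof (run_B_range Hrun k O Hk HN) as [_ HB1].
    rewrite (run_flow Hrun k O Hk HN) in HB1.
    assert (Hfrac : (sg (S k) - sg k) / T <= 1) by lra.
    apply (Rmult_le_compat_r T) in Hfrac; [|lra].
    replace ((sg (S k) - sg k) / T * T) with (sg (S k) - sg k) in Hfrac by (field; lra); lra. }
  assert (H : forall k, (k <= K)%nat -> sg (S k) <= sg O + INR (S k) * T).
  { induction k as [|k IH]; intros Hk; [specialize (Hstep O Hk); simpl; lra|].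
    specialize (IH ltac:(lia)); specialize (Hstep (S k) Hk); rewrite (S_INR (S k)); lra. }
  apply H, le_n.
Qed.

Section Attractivity.
Variables (N : nat) (E : nat -> nat -> Prop) (T : R) (r : nat -> R).
Variables (xi : nat -> nat -> nat -> Prop) (istar qs : nat).
Hypothesis HT : 0 < T.
Hypothesis Hr : forall i, (i < N)%nat -> 0 < r i < 1.
Hypothesis Hs : simple_digraph N E.
Hypothesis Hroot : is_root N E istar.
Hypothesis Hqs : is_qstar N E istar qs.

Lemma zeta_synchronizes (x : R -> nat -> State) (dom : R -> nat -> Prop) (t : R) (K P : nat) :
  is_solution N T r xi x dom -> dom t K -> zeta_at N E r istar qs xi P ->
  (snd (x 0%R O) <= P)%nat -> (P + qs * lstar N r <= snd (x 0%R O) + K)%nat ->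
  distA N (x t K) = 0.
Proof.
  intros Hsol Hd HZ HP HK.
  assert (Hi : (istar < N)%nat) by apply Hroot.
  destruct (solution_run N T r xi x dom t K HT Hsol Hd) as [sg [fire [_ [HsK Hrun]]]].
  destruct (lstar_spec N r ltac:(lia) (fun i Hi => proj1 (Hr i Hi)))
    as [rm [Kc [HL [Hrm [Hrm_le HKc]]]]].
  rewrite <- HsK; apply distA_zero, (synced_in_As N _ istar).
  - intros i Hi'; exact (run_B_range Hrun K i (le_n K) Hi').
  - apply (run_synchronizes N T r _ K sg _ _ fire HT Hr Hrun rm Kc Hrm Hrm_le HKc E istar qs
             (P - snd (x 0%R O))%nat Hs Hroot Hqs); [|rewrite HL in HK; lia].
    intros q m Hq Hm a b; rewrite <- HL in Hm.
    replace (snd (x 0%R O) + (P - snd (x 0%R O) + q * (N * Kc) + m))%nat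
      with (P + q * lstar N r + m)%nat by (rewrite HL; lia).
    apply HZ; assumption.
Qed.

(* Each flow interval lasts at most [T], so a large hybrid time [t + K] forces many jumps. *)
Lemma zeta_attracts (x : R -> nat -> State) (dom : R -> nat -> Prop) (t : R) (K P : nat) :
  is_solution N T r xi x dom -> dom t K -> zeta_at N E r istar qs xi P ->
  (snd (x 0%R O) <= P)%nat ->
  (INR (P + qs * lstar N r - snd (x 0%R O)) + 1) * (T + 1) <= t + INR K ->
  distA N (x t K) = 0.
Proof.
  intros Hsol Hd HZ HP Htime.
  apply (zeta_synchronizes x dom t K P Hsol Hd HZ HP).
  apply Nat.nlt_ge; intros Hlt.
  destruct (solution_run N T r xi x dom t K HT Hsol Hd) as [sg [fire [Hs0 [HsK Hrun]]]].
  assert (Ht : t <= INR (S K) * T).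
  { assert (HN : (0 < N)%nat) by (destruct Hroot; lia).
    rewrite <- HsK; pose proof (run_time_le N T r _ K sg _ _ fire HT HN Hrun); lra. }
  assert (HKm : INR (S K) <= INR (P + qs * lstar N r - snd (x 0%R O))) by (apply le_INR; lia).
  rewrite S_INR in *; pose proof (pos_INR K); nra.
Qed.

Lemma GFTA_of_occurrences :
  (forall l0, exists P, (l0 <= P)%nat /\ zeta_at N E r istar qs xi P) -> GFTA N T r xi.
Proof.
  intros Hocc; destruct (functional_choice _ Hocc) as [Pf HPf].
  exists (fun x0 => (INR (Pf (snd x0) + qs * lstar N r - snd x0) + 1) * (T + 1)).
  intros x dom Hsol; split.
  - pose proof (pos_INR (Pf (snd (x 0%R O)) + qs * lstar N r - snd (x 0%R O))); nra.
  - intros t K Hd Htime; destruct (HPf (snd (x 0%R O))) as [HP HZ].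
    exact (zeta_attracts x dom t K _ Hsol Hd HZ HP Htime).
Qed.

Lemma GFxTA_of_uniform_occurrences (n : nat) :
  (forall l0, exists P, (l0 <= P)%nat /\ (P + qs * lstar N r <= l0 + n)%nat /\
                        zeta_at N E r istar qs xi P) ->
  GFxTA N T r xi.
Proof.
  intros Hocc; exists ((INR n + 1) * (T + 1)); split; [pose proof (pos_INR n); nra|].
  intros x dom Hsol t K Hd Htime.
  destruct (Hocc (snd (x 0%R O))) as [P [HP [Hn HZ]]].
  apply (zeta_attracts x dom t K P Hsol Hd HZ HP).
  assert (INR (P + qs * lstar N r - snd (x 0%R O)) <= INR n) by (apply le_INR; lia).
  nra.
Qed.

End Attractivity.

Lemma contains_io_occurrences (N : nat) (E : nat -> nat -> Prop) (r : nat -> R)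
    (xi : nat -> nat -> nat -> Prop) :
  contains_io N E r xi ->
  exists istar qs, is_root N E istar /\ is_qstar N E istar qs /\
    forall l0, exists P, (l0 <= P)%nat /\ zeta_at N E r istar qs xi P.
Proof.
  intros [istar [qs [Hroot [Hqs [pos [Hpos HZ]]]]]].
  exists istar, qs; split; [exact Hroot|split; [exact Hqs|]]; intros l0.
  destruct (Nat.eq_dec (qs * lstar N r) O) as [Hempty|Hne].
  - exists l0; split; [lia|]; intros q m Hq Hm; nia.
  - assert (Hgrow : forall n, (n <= pos n)%nat)
      by (induction n as [|n IH]; [lia|specialize (Hpos n); lia]).
    exists (pos l0); split; [apply Hgrow|apply HZ].
Qed.

Theorem theorem2 (N : nat) (E : nat -> nat -> Prop) (T : R) (r : nat -> R)
    (xi : nat -> nat -> nat -> Prop) :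
  simple_digraph N E -> rooted N E -> 0 < T ->
  (forall i, (i < N)%nat -> 0 < r i < 1) ->
  in_Xi E xi ->
  (contains_io N E r xi -> UGS N T r xi /\ GFTA N T r xi) /\
  (contains_uio N E r xi -> UGS N T r xi /\ GFxTA N T r xi).
Proof.
  (* The root used is the one carried by the occurrences of [zeta]. *)
  intros Hs _ HT Hr _; split.
  - intros Hio; split; [exact (UGS_holds N T r xi HT)|].
    destruct (contains_io_occurrences N E r xi Hio) as [istar [qs [Hroot [Hqs Hocc]]]].
    exact (GFTA_of_occurrences N E T r xi istar qs HT Hr Hs Hroot Hqs Hocc).
  - intros [istar [qs [Hroot [Hqs [n [_ Hocc]]]]]]; split; [exact (UGS_holds N T r xi HT)|].
    exact (GFxTA_of_uniform_occurrences N E T r xi istar qs HT Hr Hs Hroot Hqs n Hocc).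
Qed.
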